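(* Let $T$ be an admissible LCA-tree and $z$ a positive integer. Then for every non-root node $\eta$ of $T$, \[ 0\le \mathrm{CostDecrease}(\eta,z)\le \mathrm{CostDecrease}(\mathrm{parent}(\eta),z). \] Consequently, the tree $T'$ obtained from $T$ by replacing each node value $d(\eta)$ with $\mathrm{CostDecrease}(\eta,z)$ is again an admissible LCA-tree (with value $+\infty$ at the root), so its LCA-distances form a relaxed ultrametric on the leaves.
   Context: An LCA-tree is a finite rooted tree $T$ in which every node $\eta$ (leaves included) carries a value $d(\eta)$; for leaves $\ell_i,\ell_j$, $d(\ell_i,\ell_j)=d(\ell_i\lor\ell_j)$ (lowest common ancestor, with $\ell\lor\ell=\ell$). It is admissible if $d(\eta)\ge0$ for all nodes and $d(\eta)\le d(\mathrm{parent}(\eta))$ for every non-root node. A relaxed ultrametric is a symmetric $d:L\times L\to\mathbb{R}_{\ge0}$ (here allowing $+\infty$ as a value) satisfying $d(x,z)\le\max(d(x,y),d(y,z))$ for all $x,y,z$, with $d(x,x)$ possibly nonzero. $T[\eta]$ is the subtree rooted at $\eta$ and $|T[\eta]|$ its number of leaves. For a set $\mathbf{C}$ of leaves of a tree $S$, $\mathrm{Cost}_z(S,\mathbf{C})=\sum_{\ell\text{ leaf of }S}\min_{c\in\mathbf{C}} d(\ell,c)^z$. A corresponding $z$-center of $\eta$ is a leaf $c_z(\eta)$ of $T[\eta]$ minimizing $\mathrm{Cost}_z(T[\eta],\{c\})$ over leaves $c$ of $T[\eta]$. For a non-root node $\eta$, $\mathrm{CostDecrease}(\eta,z)=|T[\eta]|\cdot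 d(\mathrm{parent}(\eta))^z-\mathrm{Cost}_z(T[\eta],\{c_z(\eta)\})$ (this does not depend on which minimizer $c_z(\eta)$ is chosen); for the root, $\mathrm{CostDecrease}=+\infty$. *)

From HB Require Import structures.
From mathcomp Require Import all_boot all_order all_algebra.
From mathcomp Require Import constructive_ereal.
Set Implicit Arguments. Unset Strict Implicit. Unset Printing Implicit Defensive.
Import Order.TTheory GRing.Theory Num.Theory.
Local Open Scope ring_scope.

Section LCATree.
Variables (V : finType) (parent : V -> V) (root : V).

(* well-formedness: the root is its own parent and every node reaches
   the root by iterating parent (hence acyclic, connected, rooted). *)
Definition is_rooted_tree : Prop :=
  parent root = root /\ forall v : V, fconnect parent v root.

(* u is an ancestor of v (v is in T[u]); reflexive *)
Definition ancestor (u v : V) : bool := fconnect parent v u.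

Definition is_leaf (v : V) : bool :=
  [forall w, (parent w == v) ==> (w == v)].

Definition subtree_leaves (eta : V) : {set V} :=
  [set l | is_leaf l && ancestor eta l].

Definition nb_anc (u : V) : nat := #|[set w | ancestor w u]|.

Definition lca (x y : V) : V :=
  Order.arg_max root (fun u => ancestor u x && ancestor u y) nb_anc.

Variables (R : realFieldType).

Definition admissible (d : V -> R) : Prop :=
  (forall v, 0 <= d v) /\ (forall v, v != root -> d v <= d (parent v)).

Definition admissibleE (d : V -> \bar R) : Prop :=
  (forall v, (0 <= d v)%E) /\ (forall v, v != root -> (d v <= d (parent v))%E).

Variables (d : V -> R) (z : nat).

Definition cost1 (eta c : V) : R :=
  \sum_(l in subtree_leaves eta) d (lca l c) ^+ z.

Definition zcenter (eta : V) : V :=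
  Order.arg_min eta (fun c => c \in subtree_leaves eta) (cost1 eta).

Definition CostDecrease (eta : V) : \bar R :=
  if eta == root then +oo%E
  else ((#|subtree_leaves eta|%:R * d (parent eta) ^+ z
         - cost1 eta (zcenter eta))%:E)%E.

End LCATree.

Definition relaxed_ultrametric (V : Type) (R : realFieldType) (P : V -> bool)
    (D : V -> V -> \bar R) : Prop :=
  (forall x y, P x -> P y -> (0 <= D x y)%E /\ D x y = D y x) /\
  (forall x y w, P x -> P y -> P w -> (D x w <= Order.max (D x y) (D y w))%E).

From Pilot Require Import Defs.
From HB Require Import structures.
From mathcomp Require Import all_boot all_order all_algebra.
From mathcomp Require Import constructive_ereal lra.
Import Order.TTheory GRing.Theory Num.Theory.
Set Implicit Arguments. Unset Strict Implicit.
Local Open Scope ring_scope.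

(* Every leaf of T[eta] is within distance d(parent eta) of any center in
   T[eta], so the cost of one center never exceeds |T[eta]| d(parent eta)^z.
   For monotonicity, the center c of eta is a candidate center for its parent
   p: the leaves of T[p] outside T[eta] pay at most d(p)^z each, so
   Cost(T[p], c_p) <= Cost(T[eta], c) + (|T[p]| - |T[eta]|) d(p)^z, and
   d(p) <= d(parent p) finishes.  Finally, the values of any admissible
   LCA-tree give an ultrametric: among lca(x,y), lca(y,w), both ancestors of y,
   the higher one is an ancestor of x and w, hence of lca(x,w). *)

Lemma arg_min_default (disp : Order.disp_t) (T : orderType disp) (I : finType)
    (i0 i1 : I) (P : pred I) (F : I -> T) :
  P i1 -> Order.arg_min i0 P F = Order.arg_min i1 P F.
Proof.
move=> Pi1; have := arg_minP F Pi1.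
rewrite /Order.arg_min /extremum; case: pickP => //= no_min [j Pj j_min].
have /negP[] := negbT (no_min j); rewrite /= Pj /=.
by apply/forallP => k; apply/implyP; apply: j_min.
Qed.

Section RootedTree.

Variables (V : finType) (parent : V -> V) (root : V).
Hypothesis parent_root : parent root = root.
Hypothesis reach_root : forall v, fconnect parent v root.

Local Notation anc := (ancestor parent).
Local Notation lca := (lca parent root).

Lemma anc_iter n v : anc (iter n parent v) v.
Proof. exact: fconnect_iter. Qed.

Lemma ancP u v : reflect (exists n, iter n parent v = u) (anc u v).
Proof.
apply: (iffP idP) => [uv | [n <-]]; last exact: anc_iter.
by exists (findex parent v u); apply: iter_findex.
Qed.

Lemma anc_refl v : anc v v.
Proof. exact: connect0. Qed.

Lemma anc_trans u v w : anc u v -> anc v w -> anc u w.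
Proof. by move=> uv vw; apply: connect_trans vw uv. Qed.

Lemma anc_parent v : anc (parent v) v.
Proof. exact: (anc_iter 1). Qed.

Lemma anc_root v : anc root v.
Proof. exact: reach_root. Qed.

Lemma iter_parent_root n : iter n parent root = root.
Proof. by elim: n => //= n ->. Qed.

(* A cycle u -> v -> u would be traversed forever, yet the root is reached. *)
Lemma anc_antisym u v : anc u v -> anc v u -> u = v.
Proof.
move=> /ancP[a vu] /ancP[b uv].
have cycle_v n : iter (n * (b + a)) parent v = v.
  by elim: n => // n IH; rewrite mulSn iterD IH iterD vu uv.
have [/eqP|ba_gt0] := posnP (b + a).
  by rewrite addn_eq0 => /andP[_ /eqP a0]; rewrite -vu a0.
have [k vroot] := ancP _ _ (anc_root v).
have v_root : v = root.
  rewrite -(cycle_v k) -(subnK (leq_pmulr k ba_gt0)) iterD vroot.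
  exact: iter_parent_root.
by rewrite -vu v_root iter_parent_root.
Qed.

Lemma anc_total x u w : anc u x -> anc w x -> anc u w || anc w u.
Proof.
move=> /ancP[a <-] /ancP[b <-]; have [ab | ba] := leqP a b.
  by rewrite -(subnK ab) iterD anc_iter orbT.
by rewrite -(subnK (ltnW ba)) iterD anc_iter.
Qed.

Lemma homo_anc (disp : Order.disp_t) (T : porderType disp) (f : V -> T) :
  (forall v, (f v <= f (parent v))%O) -> forall u v, anc u v -> (f v <= f u)%O.
Proof.
move=> f_parent u v /ancP[n <-]; elim: n => //= n IH.
exact: le_trans IH (f_parent _).
Qed.

Lemma nb_anc_lt u v : anc u v -> u != v -> (nb_anc parent u < nb_anc parent v)%N.
Proof.
move=> uv u_neq_v; apply/proper_card/properP; split.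
  by apply/subsetP => w; rewrite !inE => /anc_trans; apply.
exists v; rewrite !inE ?anc_refl //; apply: contra u_neq_v => vu.
by rewrite (anc_antisym uv vu).
Qed.

Lemma lcaP x y :
  [/\ anc (lca x y) x, anc (lca x y) y &
      forall u, anc u x -> anc u y -> anc u (lca x y)].
Proof.
rewrite /Defs.lca.
case: (@arg_maxP _ _ V root (fun u => anc u x && anc u y) (nb_anc parent)).
  by rewrite /= !anc_root.
move=> m /andP[mx my] m_max.
split => // u ux uy; have /orP[//|mu] := anc_total ux mx.
have [<-|m_neq_u] := eqVneq m u; first exact: anc_refl.
by move: (m_max u); rewrite ux uy => /(_ isT); rewrite /= leEnat leqNgt nb_anc_lt.
Qed.

Lemma lcaC x y : lca x y = lca y x.
Proof.
have [xy_x xy_y xy_max] := lcaP x y; have [yx_y yx_x yx_max] := lcaP y x.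
by apply: anc_antisym; [apply: yx_max | apply: xy_max].
Qed.

Lemma lca_max x y w : (anc (lca x y) (lca x w)) || (anc (lca y w) (lca x w)).
Proof.
have [xy_x xy_y _] := lcaP x y; have [yw_y yw_w _] := lcaP y w.
have [_ _ xw_max] := lcaP x w.
case/orP: (anc_total xy_y yw_y) => [xy_yw | yw_xy].
  by rewrite xw_max // (anc_trans xy_yw).
by rewrite orbC xw_max // (anc_trans yw_xy).
Qed.

Lemma admissibleE_relaxed_ultrametric (R : realFieldType) (D : V -> \bar R)
    (P : pred V) :
  admissibleE parent root D -> relaxed_ultrametric P (fun x y => D (lca x y)).
Proof.
move=> [D_ge0 D_parent].
have D_anc : forall u v, anc u v -> (D v <= D u)%E.
  apply: homo_anc => v; have [->|/D_parent//] := eqVneq v root.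
  by rewrite parent_root.
split=> [x y _ _|x y w _ _ _]; first by rewrite D_ge0 lcaC.
by rewrite le_max; case/orP: (lca_max x y w) => /D_anc ->; rewrite ?orbT.
Qed.

Local Notation L := (subtree_leaves parent).

Lemma ancestor_subtree_leaves l u : l \in L u -> anc u l.
Proof. by rewrite inE => /andP[]. Qed.

Lemma subtree_leaves_parent eta : L eta \subset L (parent eta).
Proof.
apply/subsetP => l; rewrite !inE => /andP[-> eta_l] /=.
exact: anc_trans (anc_parent eta) eta_l.
Qed.

(* A deepest descendant of eta has no children. *)
Lemma subtree_leaves_exists eta : exists l, l \in L eta.
Proof.
case: (@arg_maxP _ _ V eta (anc eta) (nb_anc parent) (anc_refl eta)) => v eta_v v_max.
exists v; rewrite inE eta_v andbT; apply/forall_inP => w /eqP w_child.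
apply/negPn/negP => w_neq_v.
have vw : anc v w by rewrite -w_child anc_parent.
move: (v_max w (anc_trans eta_v vw)).
by rewrite /= leEnat leqNgt nb_anc_lt // eq_sym.
Qed.

Variables (R : realFieldType) (d : V -> R) (z : nat).
Hypothesis d_admissible : admissible parent root d.

Local Notation cost := (cost1 parent root d z).
Local Notation center := (zcenter parent root d z).
Local Notation CD := (CostDecrease parent root d z).

Lemma expr_d_anc : forall u v, anc u v -> d v ^+ z <= d u ^+ z.
Proof.
have [d_ge0 d_parent] := d_admissible.
apply: (homo_anc (f := fun w => d w ^+ z)) => w.
have [->|/d_parent dw] := eqVneq w root; first by rewrite parent_root.
by rewrite lerXn2r ?nnegrE.
Qed.

Lemma expr_d_lca_le u l c : anc u l -> anc u c -> d (lca l c) ^+ z <= d u ^+ z.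
Proof. by have [_ _ lc_max] := lcaP l c => ul uc; apply/expr_d_anc/lc_max. Qed.

Lemma zcenterP eta :
  center eta \in L eta /\ forall c, c \in L eta -> cost eta (center eta) <= cost eta c.
Proof.
have [l eta_l] := subtree_leaves_exists eta.
rewrite /zcenter (arg_min_default _ _ eta_l).
by case: (arg_minP (cost eta) eta_l) => c Lc c_min; split.
Qed.

Lemma cost1_le u w c :
  anc w u -> anc u c -> cost u c <= #|L u|%:R * d w ^+ z.
Proof.
move=> wu uc; rewrite /cost1 mulr_natl -sumr_const; apply: ler_sum => l Ll.
exact: expr_d_lca_le (anc_trans wu (ancestor_subtree_leaves Ll)) (anc_trans wu uc).
Qed.

Lemma cost1_parent_le eta c : anc eta c ->
  cost (parent eta) c <= cost eta c + #|L (parent eta) :\: L eta|%:R * d (parent eta) ^+ z.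
Proof.
move=> eta_c; rewrite /cost1 (big_setID (L eta)) /=.
rewrite (setIidPr (subtree_leaves_parent eta)) lerD2l mulr_natl -sumr_const.
apply: ler_sum => l /setDP[Lpl _].
exact: expr_d_lca_le (ancestor_subtree_leaves Lpl) (anc_trans (anc_parent eta) eta_c).
Qed.

Lemma CostDecrease_ge0 eta : (0 <= CD eta)%E.
Proof.
rewrite /CostDecrease; case: ifP => _; first exact: leey.
have [Lc _] := zcenterP eta.
by rewrite lee_fin subr_ge0 (cost1_le (anc_parent eta) (ancestor_subtree_leaves Lc)).
Qed.

Lemma CostDecrease_parent eta : (CD eta <= CD (parent eta))%E.
Proof.
have [->|eta_neq_root] := eqVneq eta root; first by rewrite parent_root.
set p := parent eta.
rewrite /CostDecrease (negbTE eta_neq_root); case: ifP => _; first exact: leey.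
have [Lc c_min] := zcenterP eta; have [_ cp_min] := zcenterP p.
have cost_p : cost p (center p) <=
    cost eta (center eta) + #|L p :\: L eta|%:R * d p ^+ z.
  apply: le_trans (cp_min _ (subsetP (subtree_leaves_parent eta) _ Lc)) _.
  exact: cost1_parent_le (ancestor_subtree_leaves Lc).
have card_p : #|L p| = (#|L eta| + #|L p :\: L eta|)%N.
  by rewrite -(cardsID (L eta) (L p)) (setIidPr (subtree_leaves_parent eta)).
have d_p : d p ^+ z <= d (parent p) ^+ z by apply/expr_d_anc/anc_parent.
have := ler_wpM2l (ler0n _ #|L p|) d_p.
rewrite lee_fin card_p natrD; move: cost_p.
set C := cost eta _; set Cp := cost p _; set a := d p ^+ z.
set b := d (parent p) ^+ z; set n := (#|L eta|)%:R; set m := (#|_ :\: _|)%:R.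
lra.
Qed.

Lemma CostDecrease_admissibleE : admissibleE parent root CD.
Proof. by split=> v *; [apply: CostDecrease_ge0 | apply: CostDecrease_parent]. Qed.

End RootedTree.

Theorem mainTheorem5 (V : finType) (parent : V -> V) (root : V)
    (R : realFieldType) (d : V -> R) (z : nat) :
  is_rooted_tree parent root ->
  admissible parent root d ->
  (0 < z)%N ->
  (forall eta : V, eta != root ->
     (0 <= CostDecrease parent root d z eta)%E /\
     (CostDecrease parent root d z eta
        <= CostDecrease parent root d z (parent eta))%E) /\
  admissibleE parent root (CostDecrease parent root d z) /\
  relaxed_ultrametric (is_leaf parent)
    (fun x y => CostDecrease parent root d z (lca parent root x y)).
Proof.
move=> [parent_root reach_root] d_adm _.
have CD_adm := CostDecrease_admissibleE parent_root reach_root z d_adm.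
have [CD_ge0 CD_parent] := CD_adm.
split; last split.
- by move=> eta /CD_parent; split.
- exact: CD_adm.
- exact: (admissibleE_relaxed_ultrametric parent_root reach_root _ CD_adm).
Qed.
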